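(* Let $v_\pm>0$ and $u_->u_+$. For $\epsilon_1,\epsilon_2>0$ let $(u^{\epsilon_1\epsilon_2},v^{\epsilon_1\epsilon_2})(t,x)$ be the two-shock Riemann solution of the perturbed Brio system with data $(u_\pm,v_\pm)$. Then as $\epsilon_1,\epsilon_2\to0$, in the sense of distributions on $\{(t,x):t>0\}$, $$u^{\epsilon_1\epsilon_2}\to u_-+(u_+-u_-)H(x-\sigma t),\qquad v^{\epsilon_1\epsilon_2}\to v_-+(v_+-v_-)H(x-\sigma t)+w(t)\,\delta_S,$$ where $H$ is the Heaviside function, $\sigma=\tfrac12(u_-+u_+)$, $S=\{(t,\sigma t):t\ge0\}$ and $w(t)=\tfrac12(v_-+v_+)(u_--u_+)t$; i.e., for every $\phi\in C_0^\infty$ on $t>0$, $\iint v^{\epsilon_1\epsilon_2}\phi\,dx\,dt\to\iint(v_-+(v_+-v_-)H(x-\sigma t))\phi\,dx\,dt+\int_0^\infty w(t)\phi(t,\sigma t)\,dt$. This limit is the delta-shock solution of the transport equations $u_t+(\tfrac12u^2)_x=0$, $v_t+(uv)_x=0$ with the same Riemann data.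
   Context: Perturbed Brio system: $u_t+(\tfrac12u^2+\tfrac12\epsilon_1v^2)_x=0$, $v_t+(uv-\epsilon_2v)_x=0$, $\epsilon_1,\epsilon_2>0$, $v>0$, with Riemann data $(u_-,v_-)$ for $x<0$, $(u_+,v_+)$ for $x>0$. The two-shock Riemann solution is: $(u_-,v_-)$ for $x/t<\sigma_1$, $(u_*,v_* )$ for $\sigma_1<x/t<\sigma_2$, $(u_+,v_+)$ for $x/t>\sigma_2$, where $v_*>\max(v_-,v_+)$, $u_+<u_*<u_-$, $$u_*=u_-+(v_*-v_-)\frac{\epsilon_2-\sqrt{\epsilon_2^2+4\epsilon_1(v_*+v_-)^2}}{v_*+v_-},\qquad u_+=u_*+(v_+-v_* )\frac{\epsilon_2+\sqrt{\epsilon_2^2+4\epsilon_1(v_*+v_+)^2}}{v_*+v_+},$$ $\sigma_1=u_-+\frac{v_*(u_*-u_-)}{v_*-v_-}-\epsilon_2$, $\sigma_2=u_++\frac{v_*(u_+-u_* )}{v_+-v_*}-\epsilon_2$. The weighted delta function on $S$ is defined by $\langle w\delta_S,\phi\rangle=\int_0^\infty w(t)\phi(t,\sigma t)\,dt$. *)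

From Stdlib Require Import Reals Lra.
Open Scope R_scope.

(* Heaviside function (value at 0 is irrelevant for the integrals). *)
Definition Heav (y : R) : R := if Rlt_dec 0 y then 1 else 0.

Definition RInt_is (f : R -> R) (a b I : R) : Prop :=
  exists pr : Riemann_integrable f a b, RiemannInt pr = I.

Definition DInt_is (F : R -> R -> R) (a b c d I : R) : Prop :=
  exists g : R -> R,
    (forall t, a <= t <= b -> RInt_is (fun x => F t x) c d (g t)) /\
    RInt_is g a b I.

Definition cont2 (f : R -> R -> R) : Prop :=
  forall t x eps, 0 < eps -> exists del, 0 < del /\
    forall t' x', Rabs (t' - t) < del -> Rabs (x' - x) < del ->
      Rabs (f t' x' - f t x) < eps.

(* C^infinity in (t,x): a family D i j of all mixed partial derivatives
   d_t^i d_x^j f, each jointly continuous. *)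
Definition smooth2 (f : R -> R -> R) : Prop :=
  exists D : nat -> nat -> R -> R -> R,
    (forall t x, D O O t x = f t x) /\
    (forall i j, cont2 (D i j)) /\
    (forall i j t x, derivable_pt_lim (fun s => D i j s x) t (D (S i) j t x)) /\
    (forall i j t x, derivable_pt_lim (fun y => D i j t y) x (D i (S j) t x)).

Definition ustar_formula (e1 e2 um vm vs : R) : R :=
  um + (vs - vm) * (e2 - sqrt (e2 ^ 2 + 4 * e1 * (vs + vm) ^ 2)) / (vs + vm).
Definition uplus_formula (e1 e2 us vs vp : R) : R :=
  us + (vp - vs) * (e2 + sqrt (e2 ^ 2 + 4 * e1 * (vs + vp) ^ 2)) / (vs + vp).

Definition two_shock (e1 e2 um vm up vp us vs : R) : Prop :=
  Rmax vm vp < vs /\ up < us < um /\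
  us = ustar_formula e1 e2 um vm vs /\
  up = uplus_formula e1 e2 us vs vp.

Definition sigma1 (e2 um vm us vs : R) : R :=
  um + vs * (us - um) / (vs - vm) - e2.
Definition sigma2 (e2 up vp us vs : R) : R :=
  up + vs * (up - us) / (vp - vs) - e2.

Definition piece3 (s1 s2 lft mid rgt t x : R) : R :=
  if Rlt_dec x (s1 * t) then lft else if Rlt_dec x (s2 * t) then mid else rgt.

Definition brio_u (e2 um vm up vp us vs : R) (t x : R) : R :=
  piece3 (sigma1 e2 um vm us vs) (sigma2 e2 up vp us vs) um us up t x.
Definition brio_v (e2 um vm up vp us vs : R) (t x : R) : R :=
  piece3 (sigma1 e2 um vm us vs) (sigma2 e2 up vp us vs) vm vs vp t x.

(* After some generic integration facts, the file proceeds in four steps.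
   1. Shock speeds (pure algebra): for a two-shock state, sigma1 <= sigma2 both lie
      within E = 4 e2 + sqrt e1 (v_- + v_+) of sigma = (u_- + u_+)/2, the mass
      v_* (sigma2 - sigma1) is within (v_- + v_+) E of w'(t), and E -> 0.
   2. Test functions: phi, jointly continuous with support in [a,b] x [c,d], is
      uniformly continuous and bounded; its tail integrals J(t,p) = int_p^d phi(t,x) dx
      are Lipschitz in p and continuous in t along lines p = s t + q.
   3. Inner integrals: a profile l | m | r with jumps at s1 t <= s2 t pairs with
      phi(t,.) to  l J(t,c) + (m - l) J(t,s1 t) + (r - m) J(t,s2 t)  (the Heaviside
      profile is the case s1 = s2, m = l).
   4. Convergence: the u-pairing moves by O(E), and in the v-pairing the mass
      v_* int_{sigma1 t}^{sigma2 t} phi concentrates to w(t) phi(t, sigma t),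
      uniformly in t; integrating over t in [a,b] gives the theorem. *)

From Stdlib Require Import Reals Lra Psatz Classical ClassicalEpsilon.
From Coquelicot Require Import Coquelicot.
Open Scope R_scope.

Lemma RInt_is_RInt (g : R -> R) (a b : R) : ex_RInt g a b -> RInt_is g a b (RInt g a b).
Proof. intros Hg. exists (ex_RInt_Reals_0 _ _ _ Hg). now rewrite <- RInt_Reals. Qed.

Lemma DInt_is_RInt (F : R -> R -> R) (g : R -> R) (a b c d : R) :
  (forall t, a <= t <= b -> is_RInt (F t) c d (g t)) -> ex_RInt g a b ->
  DInt_is F a b c d (RInt g a b).
Proof.
  intros HF Hg. exists g. split; [|now apply RInt_is_RInt].
  intros t Ht. rewrite <- (is_RInt_unique _ _ _ _ (HF t Ht)).
  apply RInt_is_RInt. eexists; apply HF, Ht.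
Qed.

Lemma RInt_close (g h : R -> R) (a b theta : R) :
  a <= b -> ex_RInt g a b -> ex_RInt h a b ->
  (forall t, a <= t <= b -> Rabs (g t - h t) <= theta) ->
  Rabs (RInt g a b - RInt h a b) <= (b - a) * theta.
Proof.
  intros Hab Hg Hh Hgh.
  replace (RInt g a b - RInt h a b) with (RInt (fun t => g t - h t) a b)
    by exact (RInt_minus (V:=R_CompleteNormedModule) g h a b Hg Hh).
  apply abs_RInt_le_const; auto.
  apply (ex_RInt_minus (V:=R_NormedModule)); auto.
Qed.

Lemma RInt_close_sum (g h k : R -> R) (a b theta : R) :
  a <= b -> ex_RInt g a b -> ex_RInt h a b -> ex_RInt k a b ->
  (forall t, a <= t <= b -> Rabs (g t - (h t + k t)) <= theta) ->
  Rabs (RInt g a b - (RInt h a b + RInt k a b)) <= (b - a) * theta.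
Proof.
  intros Hab Hg Hh Hk Hghk.
  replace (RInt h a b + RInt k a b) with (RInt (fun t => h t + k t) a b)
    by exact (RInt_plus (V:=R_CompleteNormedModule) h k a b Hh Hk).
  apply RInt_close; auto. apply (ex_RInt_plus (V:=R_NormedModule)); auto.
Qed.

Lemma abs_RInt_le_const_unordered (g : R -> R) (y z K : R) : ex_RInt g y z ->
  (forall x, Rmin y z <= x <= Rmax y z -> Rabs (g x) <= K) ->
  Rabs (RInt g y z) <= Rabs (z - y) * K.
Proof.
  intros Hg HK. destruct (Rle_dec y z) as [Hyz|Hyz].
  - rewrite (Rabs_pos_eq (z - y)) by lra. apply abs_RInt_le_const; auto.
    intros x Hx. apply HK. rewrite Rmin_left, Rmax_right; lra.
  - rewrite <- (opp_RInt_swap g z y) by (apply ex_RInt_swap; auto).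
    rewrite Rabs_Ropp, (Rabs_left (z - y)) by lra. replace (- (z - y)) with (y - z) by ring.
    apply abs_RInt_le_const; [lra | apply ex_RInt_swap; auto |].
    intros x Hx. apply HK. rewrite Rmin_right, Rmax_left; lra.
Qed.

Lemma continuous_of_eps_delta (g : R -> R) (x : R) :
  (forall eps, 0 < eps -> exists del, 0 < del /\
     forall y, Rabs (y - x) < del -> Rabs (g y - g x) < eps) -> continuous g x.
Proof.
  intros Hg. apply continuity_pt_filterlim. intros eps Heps.
  destruct (Hg eps Heps) as [del [Hdel Hclose]].
  exists del; split; [lra|]. intros y [_ Hy]. apply Hclose, Hy.
Qed.

Lemma continuous_lin_comb3 (A B C : R) (F G H : R -> R) (t0 : R) :
  continuous F t0 -> continuous G t0 -> continuous H t0 ->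
  continuous (fun t => A * F t + B * G t + C * H t) t0.
Proof.
  intros HF HG HH.
  apply (continuous_plus (V:=R_NormedModule) (fun t => A * F t + B * G t) (fun t => C * H t));
    [apply (continuous_plus (V:=R_NormedModule) (fun t => A * F t) (fun t => B * G t))|];
    apply (continuous_scal_r (V:=R_NormedModule)); assumption.
Qed.

Lemma abs_mul_le (x y A B : R) : Rabs x <= A -> Rabs y <= B -> Rabs (x * y) <= A * B.
Proof.
  intros Hx Hy. rewrite Rabs_mult.
  apply Rmult_le_compat; auto using Rabs_pos.
Qed.

Lemma half_share (K theta : R) : 0 <= K -> 0 < theta ->
  0 < theta / (2 * (K + 1)) /\ K * (theta / (2 * (K + 1))) <= theta / 2.
Proof.
  intros HK Htheta. split; [apply Rdiv_lt_0_compat; lra|].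
  apply Rle_trans with ((K + 1) * (theta / (2 * (K + 1)))); [|right; field; lra].
  apply Rmult_le_compat_r; [apply Rlt_le, Rdiv_lt_0_compat|]; lra.
Qed.

Lemma sqrt_sum_sq_bounds x y : 0 <= x -> 0 <= y ->
  x <= sqrt (x ^ 2 + y ^ 2) /\ y <= sqrt (x ^ 2 + y ^ 2) /\ sqrt (x ^ 2 + y ^ 2) <= x + y.
Proof.
  intros Hx Hy. repeat split.
  - rewrite <- (sqrt_square x) at 1 by lra. apply sqrt_le_1_alt. nra.
  - rewrite <- (sqrt_square y) at 1 by lra. apply sqrt_le_1_alt. nra.
  - rewrite <- (sqrt_square (x + y)) by lra. apply sqrt_le_1_alt. nra.
Qed.

(* The jump conditions rewritten through al = (R1 - e2) / (vs + vm) and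
   be = (e2 + R2) / (vs + vp), R1 and R2 being their square roots: the speeds become
   affine in al, be, which are of size sqrt e1 + e2 and nearly balance each other. *)
Lemma two_shock_parametrization e1 e2 um vm up vp us vs :
  0 < e1 -> 0 < e2 -> 0 < vm -> 0 < vp -> two_shock e1 e2 um vm up vp us vs ->
  exists al be,
    sigma1 e2 um vm us vs = um - vs * al - e2 /\ sigma2 e2 up vp us vs = up + vs * be - e2 /\
    um - up = (vs - vm) * al + (vs - vp) * be /\
    0 <= al <= 2 * sqrt e1 /\ 2 * sqrt e1 <= be /\
    (vs + vp) * be <= 2 * e2 + 2 * sqrt e1 * (vs + vp) /\
    Rabs ((vs + vm) * al - (vs + vp) * be - 2 * sqrt e1 * (vm - vp) + 2 * e2) <= e2 /\
    Rmax vm vp < vs.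
Proof.
  intros He1 He2 Hvm Hvp [Hmax [[Hup Hum] [Hus Hupl]]].
  pose proof (Rmax_Rlt vm vp vs) as [Hvs _]. destruct (Hvs Hmax) as [Hvsm Hvsp].
  unfold ustar_formula in Hus. unfold uplus_formula in Hupl.
  set (k := sqrt e1) in *.
  assert (Hk : 0 < k) by (apply sqrt_lt_R0; lra).
  assert (Hkk : k * k = e1) by (apply sqrt_sqrt; lra).
  set (R1 := sqrt (e2 ^ 2 + 4 * e1 * (vs + vm) ^ 2)) in *.
  set (R2 := sqrt (e2 ^ 2 + 4 * e1 * (vs + vp) ^ 2)) in *.
  assert (B1 : e2 <= R1 /\ 2 * k * (vs + vm) <= R1 /\ R1 <= e2 + 2 * k * (vs + vm)).
  { unfold R1. replace (e2 ^ 2 + 4 * e1 * (vs + vm) ^ 2) with (e2 ^ 2 + (2 * k * (vs + vm)) ^ 2)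
      by (rewrite <- Hkk; ring). apply sqrt_sum_sq_bounds; nra. }
  assert (B2 : e2 <= R2 /\ 2 * k * (vs + vp) <= R2 /\ R2 <= e2 + 2 * k * (vs + vp)).
  { unfold R2. replace (e2 ^ 2 + 4 * e1 * (vs + vp) ^ 2) with (e2 ^ 2 + (2 * k * (vs + vp)) ^ 2)
      by (rewrite <- Hkk; ring). apply sqrt_sum_sq_bounds; nra. }
  clearbody R1 R2 k.
  exists ((R1 - e2) / (vs + vm)), ((e2 + R2) / (vs + vp)).
  set (al := (R1 - e2) / (vs + vm)). set (be := (e2 + R2) / (vs + vp)).
  assert (Pal : (vs + vm) * al = R1 - e2) by (unfold al; field; lra).
  assert (Pbe : (vs + vp) * be = e2 + R2) by (unfold be; field; lra).
  assert (Eus : us = um - (vs - vm) * al) by (rewrite Hus; unfold al; field; lra).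
  assert (Eup : up = us - (vs - vp) * be) by (rewrite Hupl at 1; unfold be; field; lra).
  clearbody al be.
  repeat split; try nra.
  - unfold sigma1. rewrite Eus. field. lra.
  - unfold sigma2. rewrite Eup. field. lra.
  - apply Rabs_le_between. lra.
Qed.

Lemma shock_speed_estimates e2 k um vm up vp vs al be :
  0 < e2 -> 0 <= k -> 0 < vm -> 0 < vp -> Rmax vm vp < vs ->
  um - up = (vs - vm) * al + (vs - vp) * be ->
  0 <= al <= 2 * k -> 2 * k <= be -> (vs + vp) * be <= 2 * e2 + 2 * k * (vs + vp) ->
  Rabs ((vs + vm) * al - (vs + vp) * be - 2 * k * (vm - vp) + 2 * e2) <= e2 ->
  let s1 := um - vs * al - e2 in let s2 := up + vs * be - e2 in
  let E := 4 * e2 + k * (vm + vp) in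
  s1 <= s2 /\ Rabs (s1 - (um + up) / 2) <= E /\ Rabs (s2 - (um + up) / 2) <= E /\
  Rabs (vs * (s2 - s1) - (vm + vp) * (um - up) / 2) <= (vm + vp) * E.
Proof.
  intros He2 Hk Hvm Hvp Hvs Hjump Hal Hbe Hbe' Hxi s1 s2 E.
  apply Rmax_Rlt in Hvs. destruct Hvs as [Hvsm Hvsp].
  assert (Eup : up = um - (vs - vm) * al - (vs - vp) * be) by lra.
  subst s1 s2 E up. clear Hjump.
  apply Rabs_le_between in Hxi.
  assert (Hvbe : 2 * k * vp <= vp * be <= 2 * k * vp + 2 * e2) by (split; nra).
  assert (Hval : 0 <= vs * al) by nra.
  repeat split.
  - nra.
  - apply Rabs_le_between. split; nra.
  - apply Rabs_le_between. split; nra.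
  - (* with xi = (vs + vm) al - (vs + vp) be - 2 k (vm - vp) in [-3 e2, -e2], the defect
       is  k (vm - vp)^2 + (vm - vp) xi / 2 + vm vp (al + be),  each term O(e2 + k) *)
    set (xi := (vs + vm) * al - (vs + vp) * be - 2 * k * (vm - vp)).
    fold xi in Hxi.
    match goal with |- Rabs ?e <= _ =>
      replace e with (k * (vm - vp) ^ 2 + (vm - vp) * xi / 2 + vm * vp * al + vm * vp * be)
        by (unfold xi; field) end.
    assert (Hx1 : Rabs ((vm - vp) * xi) <= (vm + vp) * (3 * e2)).
    { apply abs_mul_le; apply Rabs_le_between; lra. }
    apply Rabs_le_between in Hx1.
    assert (0 <= vm * vp) by nra.
    assert (0 <= vm * vp * al <= 2 * k * vm * vp) by (split; nra).
    assert (vm * vp * be <= 2 * k * vm * vp + 2 * vm * e2) by nra.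
    assert (0 <= k * (vm - vp) ^ 2) by (apply Rmult_le_pos; [lra | apply pow2_ge_0]).
    assert (0 <= vp * e2) by nra. assert (0 <= vm * e2) by nra.
    apply Rabs_le_between. split; nra.
Qed.

Lemma two_shock_speeds e1 e2 um vm up vp us vs :
  0 < e1 -> 0 < e2 -> 0 < vm -> 0 < vp -> two_shock e1 e2 um vm up vp us vs ->
  let s1 := sigma1 e2 um vm us vs in let s2 := sigma2 e2 up vp us vs in
  let E := 4 * e2 + sqrt e1 * (vm + vp) in
  0 < vs /\ up < us < um /\ s1 <= s2 /\
  Rabs (s1 - (um + up) / 2) <= E /\ Rabs (s2 - (um + up) / 2) <= E /\
  Rabs (vs * (s2 - s1) - (vm + vp) * (um - up) / 2) <= (vm + vp) * E.
Proof.
  intros He1 He2 Hvm Hvp Hts s1 s2 E.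
  assert (Hus : up < us < um) by apply Hts.
  destruct (two_shock_parametrization e1 e2 um vm up vp us vs He1 He2 Hvm Hvp Hts)
    as [al [be [Hs1 [Hs2 [Hjump [Hal [Hbe [Hbe' [Hxi Hvs]]]]]]]]].
  assert (Hvs0 : 0 < vs) by (pose proof (Rmax_l vm vp); lra).
  subst s1 s2 E. rewrite Hs1, Hs2.
  split; [exact Hvs0|]. split; [exact Hus|].
  apply shock_speed_estimates; auto using sqrt_pos.
Qed.

Lemma shock_deviation_small V rho : 0 <= V -> 0 < rho ->
  exists delta, 0 < delta /\ forall e1 e2, 0 < e1 < delta -> 0 < e2 < delta ->
    4 * e2 + sqrt e1 * V < rho.
Proof.
  intros HV Hrho.
  set (r := rho / (2 * (V + 1))).
  assert (Hr : 0 < r) by (unfold r; apply Rdiv_lt_0_compat; lra).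
  assert (HrV : r * V < rho / 2).
  { apply Rlt_le_trans with (r * (V + 1)); [nra|]. right. unfold r. field. lra. }
  exists (Rmin (rho / 8) (r ^ 2)). split; [apply Rmin_pos; nra|].
  intros e1 e2 [He1 He1'] [He2 He2'].
  pose proof (Rmin_l (rho / 8) (r ^ 2)). pose proof (Rmin_r (rho / 8) (r ^ 2)).
  assert (Hsqrt : sqrt e1 < r).
  { rewrite <- (sqrt_pow2 r) by lra. apply sqrt_lt_1_alt. lra. }
  pose proof (sqrt_pos e1). nra.
Qed.

Lemma smooth2_cont2 (phi : R -> R -> R) : smooth2 phi -> cont2 phi.
Proof.
  intros [D [HD0 [HDc _]]] t x eps Heps.
  destruct (HDc O O t x eps Heps) as [del [Hdel Hclose]].
  exists del; split; [exact Hdel|]. intros t' x'. rewrite <- !HD0. apply Hclose.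
Qed.

Definition unit_step_at (p : R) (s : R -> R) : Prop :=
  (forall x, x < p -> s x = 0) /\ (forall x, p < x -> s x = 1).

(* The pairing of the profile l | m | r (jumps at s1 t and s2 t) with f(t,.) on [c,d],
   expressed through the tail integrals int_p^d f(t,.). *)
Definition step_pairing (f : R -> R -> R) (c d s1 s2 l m r t : R) : R :=
  l * RInt (f t) c d + (m - l) * RInt (f t) (s1 * t) d + (r - m) * RInt (f t) (s2 * t) d.

Definition heav_pairing (f : R -> R -> R) (c d s l r t : R) : R :=
  step_pairing f c d s s l l r t.

Section TestFunction.
Variables (f : R -> R -> R) (a b c d : R).
Hypotheses (f_cont : cont2 f) (Hab : a < b) (Hcd : c < d)
  (f_supp : forall t x, ~ (a <= t <= b /\ c <= x <= d) -> f t x = 0).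

Lemma f_outside_strip t x : x < c \/ d < x -> f t x = 0.
Proof. intros Hx. apply f_supp. intros [_ Hin]. lra. Qed.

(* Uniform continuity, by compactness of a neighbourhood of the support. *)
Lemma f_unif_cont eps : 0 < eps -> exists del, 0 < del /\
  forall t x t' x', Rabs (t' - t) < del -> Rabs (x' - x) < del ->
    Rabs (f t' x' - f t x) < eps.
Proof.
  intros Heps.
  assert (Hmod : forall u v, {del : posreal | forall t x, Rabs (t - u) < del ->
            Rabs (x - v) < del -> Rabs (f t x - f u v) < eps / 2}).
  { intros u v. apply constructive_indefinite_description.
    destruct (f_cont u v (eps / 2)) as [del [Hdel Hclose]]; [lra|].
    exists (mkposreal del Hdel). exact Hclose. }
  destruct (compactness_value_2d (a - 1) (b + 1) (c - 1) (d + 1)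
              (fun u v => pos_div_2 (proj1_sig (Hmod u v)))) as [dd Hdd].
  exists (Rmin dd 1). split; [apply Rmin_pos; [apply cond_pos | lra]|].
  intros t x t' x' Ht Hx.
  pose proof (Rmin_l dd 1). pose proof (Rmin_r dd 1).
  apply Rabs_lt_between' in Ht. apply Rabs_lt_between' in Hx.
  destruct (classic (a - 1 <= t <= b + 1 /\ c - 1 <= x <= d + 1)) as [[Hin1 Hin2]|Hout].
  - (* both points lie in the ball of modulus del(u,v) around a common centre *)
    apply NNPP. intro Hfar. apply (Hdd t x Hin1 Hin2).
    intros [u [v [_ [_ [Hu [Hv Hdu]]]]]]. apply Hfar.
    destruct (Hmod u v) as [D HD]; simpl in Hu, Hv, Hdu.
    apply Rabs_lt_between' in Hu. apply Rabs_lt_between' in Hv.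
    assert (H1 : Rabs (f t x - f u v) < eps / 2) by (apply HD; apply Rabs_lt_between'; lra).
    assert (H2 : Rabs (f t' x' - f u v) < eps / 2) by (apply HD; apply Rabs_lt_between'; lra).
    apply Rabs_lt_between' in H1, H2. apply Rabs_lt_between'. lra.
  -
    rewrite (f_supp t x), (f_supp t' x'), Rminus_0_r, Rabs_R0; [lra| |];
      intros Hin; apply Hout; lra.
Qed.

(* Boundedness: from the zero region x > d, walk left in steps on which f moves by < 1. *)
Lemma f_bounded : exists M, 0 < M /\ forall t x, Rabs (f t x) <= M.
Proof.
  destruct (f_unif_cont 1 Rlt_0_1) as [del [Hdel Hclose]].
  set (h := del / 2). assert (Hh : 0 < h < del) by (unfold h; lra).
  assert (Hwalk : forall (n : nat) t x, d < x + INR n * h -> Rabs (f t x) <= INR n).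
  { induction n as [|n IH]; intros t x Hx.
    - rewrite f_outside_strip, Rabs_R0; simpl in *; lra.
    - rewrite S_INR in *. destruct (Rlt_dec d x) as [Hdx|Hdx].
      + rewrite f_outside_strip, Rabs_R0 by lra. pose proof (pos_INR n). lra.
      + assert (Hnext := IH t (x + h) ltac:(lra)).
        assert (Hstep : Rabs (f t x - f t (x + h)) < 1).
        { apply Hclose.
          - rewrite Rminus_diag, Rabs_R0; lra.
          - apply Rabs_lt_between'; lra. }
        apply Rabs_le_between. apply Rabs_le_between in Hnext.
        apply Rabs_lt_between' in Hstep. lra. }
  destruct (nfloor_ex ((d - c) / h)) as [n [_ Hn]].
  { apply Rdiv_le_0_compat; lra. }
  exists (INR n + 1). split; [pose proof (pos_INR n); lra|].
  intros t x. destruct (Rlt_dec x c) as [Hxc|Hxc].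
  - rewrite f_outside_strip, Rabs_R0 by lra. pose proof (pos_INR n); lra.
  - rewrite <- S_INR. apply Hwalk. rewrite S_INR.
    apply Rmult_lt_compat_r with (r := h) in Hn; [|lra].
    unfold Rdiv in Hn. rewrite Rmult_assoc, Rinv_l, Rmult_1_r in Hn; lra.
Qed.

Lemma f_slice_integrable t y z : ex_RInt (f t) y z.
Proof.
  apply (ex_RInt_continuous (V:=R_CompleteNormedModule)). intros x _.
  apply continuous_of_eps_delta. intros eps Heps.
  destruct (f_unif_cont eps Heps) as [del [Hdel Hclose]].
  exists del; split; [lra|]. intros x' Hx'. apply Hclose; [|exact Hx'].
  rewrite Rminus_diag, Rabs_R0; lra.
Qed.

Lemma step_tail_integral t p (s : R -> R) : unit_step_at p s ->
  is_RInt (fun x => s x * f t x) c d (RInt (f t) p d).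
Proof.
  intros [Hs0 Hs1].
  set (u := Rmax c (Rmin p d)).
  assert (Hu : c <= u <= d /\ (p <= c -> u = c) /\ (c <= p <= d -> u = p) /\ (d <= p -> u = d)).
  { unfold u, Rmin, Rmax; repeat destruct Rle_dec; lra. }
  assert (Hleft : is_RInt (fun x => s x * f t x) c u 0).
  { apply is_RInt_ext with (f := fun _ => 0).
    - intros x Hx. rewrite Hs0; [symmetry; apply Rmult_0_l|].
      rewrite Rmin_left, Rmax_right in Hx by lra.
      destruct (Rle_dec p d); lra.
    - pose proof (is_RInt_const (V:=R_NormedModule) c u 0) as Hconst.
      change (scal (u - c) 0) with ((u - c) * 0) in Hconst.
      now rewrite Rmult_0_r in Hconst. }
  assert (Hright : is_RInt (fun x => s x * f t x) u d (RInt (f t) u d)).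
  { apply is_RInt_ext with (f := f t).
    - intros x Hx. rewrite Hs1; [symmetry; apply Rmult_1_l|].
      rewrite Rmin_left, Rmax_right in Hx by lra.
      destruct (Rle_dec c p); lra.
    - apply (RInt_correct (V:=R_CompleteNormedModule)), f_slice_integrable. }
  (* between p and u the slice vanishes (or p = u), so the tails from p and from u agree *)
  assert (Hgap : RInt (f t) p u = 0).
  { rewrite (RInt_ext (f t) (fun _ => 0)), RInt_const; [apply Rmult_0_r|].
    intros x Hx. apply f_outside_strip.
    unfold Rmin, Rmax in Hx; repeat destruct Rle_dec in Hx; lra. }
  replace (RInt (f t) p d) with (0 + RInt (f t) u d).
  - apply (is_RInt_Chasles (V:=R_NormedModule)) with u; assumption.
  - rewrite <- Hgap. apply (RInt_Chasles (V:=R_CompleteNormedModule)); apply f_slice_integrable.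
Qed.

Lemma two_step_integral t p q (sp sq : R -> R) l m r :
  unit_step_at p sp -> unit_step_at q sq ->
  is_RInt (fun x => (l + (m - l) * sp x + (r - m) * sq x) * f t x) c d
    (l * RInt (f t) c d + (m - l) * RInt (f t) p d + (r - m) * RInt (f t) q d).
Proof.
  intros Hsp Hsq.
  assert (Hall := RInt_correct (V:=R_CompleteNormedModule) _ _ _ (f_slice_integrable t c d)).
  assert (Hsum := is_RInt_plus _ _ _ _ _ _
    (is_RInt_plus _ _ _ _ _ _ (is_RInt_scal _ _ _ l _ Hall)
       (is_RInt_scal _ _ _ (m - l) _ (step_tail_integral t p sp Hsp)))
    (is_RInt_scal _ _ _ (r - m) _ (step_tail_integral t q sq Hsq))).
  eapply is_RInt_ext; [|exact Hsum].
  intros x _. change (l * f t x + (m - l) * (sp x * f t x) + (r - m) * (sq x * f t x)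
                      = (l + (m - l) * sp x + (r - m) * sq x) * f t x). ring.
Qed.

Lemma pairing_piece3 s1 s2 l m r t : s1 * t <= s2 * t ->
  is_RInt (fun x => piece3 s1 s2 l m r t x * f t x) c d (step_pairing f c d s1 s2 l m r t).
Proof.
  intros H12.
  set (step p x := if Rlt_dec x p then 0 else 1).
  assert (Hstep : forall p, unit_step_at p (step p)).
  { intros p; split; intros x Hx; unfold step; destruct Rlt_dec; lra. }
  eapply is_RInt_ext;
    [|exact (two_step_integral t _ _ _ _ l m r (Hstep (s1 * t)) (Hstep (s2 * t)))].
  intros x _. apply Rmult_eq_compat_r. unfold piece3, step.
  destruct (Rlt_dec x (s1 * t)); destruct (Rlt_dec x (s2 * t)); lra.
Qed.

Lemma pairing_heaviside s l r t :
  is_RInt (fun x => (l + (r - l) * Heav (x - s * t)) * f t x) c d (heav_pairing f c d s l r t).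
Proof.
  set (step x := Heav (x - s * t)).
  assert (Hstep : unit_step_at (s * t) step).
  { split; intros x Hx; unfold step, Heav; destruct Rlt_dec; lra. }
  eapply is_RInt_ext; [|exact (two_step_integral t _ _ _ _ l l r Hstep Hstep)].
  intros x _. apply Rmult_eq_compat_r. unfold step. ring.
Qed.

Lemma tail_sub t y z : RInt (f t) y d - RInt (f t) z d = RInt (f t) y z.
Proof.
  rewrite <- (RInt_Chasles (V:=R_CompleteNormedModule) (f t) y z d)
    by apply f_slice_integrable.
  change (RInt (f t) y z + RInt (f t) z d - RInt (f t) z d = RInt (f t) y z). ring.
Qed.

Lemma tail_lipschitz M t y z : (forall t x, Rabs (f t x) <= M) ->
  Rabs (RInt (f t) y d - RInt (f t) z d) <= M * Rabs (y - z).
Proof.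
  intros HM. rewrite tail_sub, Rmult_comm, Rabs_minus_sym.
  apply abs_RInt_le_const_unordered; [apply f_slice_integrable | intros; apply HM].
Qed.

Lemma tail_continuous p q t0 : continuous (fun t => RInt (f t) (p * t + q) d) t0.
Proof.
  destruct f_bounded as [M [HM HMb]].
  apply continuous_of_eps_delta. intros eps Heps.
  set (y0 := p * t0 + q). set (K := Rabs (d - y0) + 1). set (L := M * (Rabs p + 1)).
  assert (HK : 0 < K) by (unfold K; pose proof (Rabs_pos (d - y0)); lra).
  assert (HL : 0 < L) by (unfold L; pose proof (Rabs_pos p); nra).
  destruct (f_unif_cont (eps / (2 * K))) as [del [Hdel Hclose]].
  { apply Rdiv_lt_0_compat; lra. }
  exists (Rmin del (eps / (2 * L))). split.
  { apply Rmin_pos; [lra | apply Rdiv_lt_0_compat; lra]. }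
  intros t Ht.
  assert (Ht1 : Rabs (t - t0) < del) by (eapply Rlt_le_trans; [exact Ht | apply Rmin_l]).
  assert (Ht2 : Rabs (t - t0) < eps / (2 * L)) by (eapply Rlt_le_trans; [exact Ht | apply Rmin_r]).
  (* move the lower limit at the same time t, then compare the two slices on [y0, d] *)
  assert (Hsplit : RInt (f t) (p * t + q) d - RInt (f t0) y0 d
      = RInt (f t) (p * t + q) y0 + RInt (fun x => f t x - f t0 x) y0 d).
  { replace (RInt (fun x => f t x - f t0 x) y0 d) with (RInt (f t) y0 d - RInt (f t0) y0 d)
      by (symmetry; exact (RInt_minus (V:=R_CompleteNormedModule) (f t) (f t0) y0 d
                             (f_slice_integrable _ _ _) (f_slice_integrable _ _ _))).
    rewrite <- (tail_sub t (p * t + q) y0). ring. }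
  rewrite Hsplit.
  assert (Hmove : Rabs (RInt (f t) (p * t + q) y0) <= Rabs (y0 - (p * t + q)) * M).
  { apply abs_RInt_le_const_unordered; [apply f_slice_integrable | intros; apply HMb]. }
  assert (Hslices : Rabs (RInt (fun x => f t x - f t0 x) y0 d) <= Rabs (d - y0) * (eps / (2 * K))).
  { apply abs_RInt_le_const_unordered.
    - apply (ex_RInt_minus (V:=R_NormedModule)); apply f_slice_integrable.
    - intros x _. left. apply Hclose; [exact Ht1|]. rewrite Rminus_diag, Rabs_R0; lra. }
  assert (Hmove' : Rabs (y0 - (p * t + q)) * M <= eps / 2).
  { replace (y0 - (p * t + q)) with (- (p * (t - t0))) by (unfold y0; ring).
    rewrite Rabs_Ropp, Rabs_mult. apply Rle_trans with ((Rabs p + 1) * (eps / (2 * L)) * M).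
    - apply Rmult_le_compat_r; [lra|]. pose proof (Rabs_pos p). pose proof (Rabs_pos (t - t0)).
      apply Rmult_le_compat; lra.
    - right. unfold L. pose proof (Rabs_pos p). field. lra. }
  assert (Hslices' : Rabs (d - y0) * (eps / (2 * K)) < eps / 2).
  { apply Rlt_le_trans with (K * (eps / (2 * K))).
    - apply Rmult_lt_compat_r; [apply Rdiv_lt_0_compat|unfold K]; lra.
    - right. field. lra. }
  eapply Rle_lt_trans; [apply Rabs_triang | lra].
Qed.

Lemma trace_continuous p t0 : continuous (fun t => f t (p * t)) t0.
Proof.
  apply continuous_of_eps_delta. intros eps Heps.
  destruct (f_unif_cont eps Heps) as [del [Hdel Hclose]].
  pose proof (Rabs_pos p) as Hp.
  exists (del / (Rabs p + 1)). split; [apply Rdiv_lt_0_compat; lra|].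
  intros t Ht. assert (Hdt : (Rabs p + 1) * Rabs (t - t0) < del).
  { apply Rmult_lt_compat_l with (r := Rabs p + 1) in Ht; [|lra].
    replace ((Rabs p + 1) * (del / (Rabs p + 1))) with del in Ht by (field; lra). exact Ht. }
  pose proof (Rabs_pos (t - t0)).
  apply Hclose; [nra|]. rewrite <- Rmult_minus_distr_l, Rabs_mult. nra.
Qed.

Lemma step_pairing_integrable s1 s2 l m r : ex_RInt (step_pairing f c d s1 s2 l m r) a b.
Proof.
  apply (ex_RInt_continuous (V:=R_CompleteNormedModule)). intros t0 _.
  assert (Hline : forall p, continuous (fun t => RInt (f t) (p * t) d) t0).
  { intros p. apply (continuous_ext (fun t => RInt (f t) (p * t + 0) d));
      [intros t; now rewrite Rplus_0_r | apply tail_continuous]. }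
  assert (Hfixed : continuous (fun t => RInt (f t) c d) t0).
  { apply (continuous_ext (fun t => RInt (f t) (0 * t + c) d));
      [intros t; now rewrite Rmult_0_l, Rplus_0_l | apply tail_continuous]. }
  apply continuous_lin_comb3; auto.
Qed.

Lemma weighted_trace_integrable (w : R -> R) s : (forall t, continuous w t) ->
  ex_RInt (fun t => w t * f t (s * t)) a b.
Proof.
  intros Hw. apply (ex_RInt_continuous (V:=R_CompleteNormedModule)). intros t0 _.
  apply (continuous_mult (K:=R_AbsRing) w (fun t => f t (s * t))); auto using trace_continuous.
Qed.

Lemma middle_integral_approx t p q z om : p <= q ->
  (forall x, p <= x <= q -> Rabs (f t x - f t z) <= om) ->
  Rabs (RInt (f t) p q - (q - p) * f t z) <= (q - p) * om.
Proof.
  intros Hpq Hom.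
  replace ((q - p) * f t z) with (RInt (fun _ => f t z) p q)
    by exact (RInt_const (V:=R_CompleteNormedModule) p q (f t z)).
  apply RInt_close; auto using f_slice_integrable, ex_RInt_const.
Qed.

Section Estimates.
Variables (M : R).
Hypothesis f_le_M : forall t x, Rabs (f t x) <= M.

Lemma tail_shift_bound t s s' E : 0 <= t -> Rabs (s - s') <= E ->
  Rabs (RInt (f t) (s * t) d - RInt (f t) (s' * t) d) <= M * E * t.
Proof.
  intros Ht Hs.
  assert (HM : 0 <= M) by (pose proof (Rabs_pos (f 0 0)); pose proof (f_le_M 0 0); lra).
  eapply Rle_trans; [apply tail_lipschitz, f_le_M|].
  rewrite <- Rmult_minus_distr_r, Rabs_mult, (Rabs_pos_eq t) by lra.
  rewrite Rmult_assoc. apply Rmult_le_compat_l, Rmult_le_compat_r; lra.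
Qed.

Lemma u_pairing_estimate um up us s1 s2 sg E t : 0 <= t -> up <= us <= um ->
  Rabs (s1 - sg) <= E -> Rabs (s2 - sg) <= E ->
  Rabs (step_pairing f c d s1 s2 um us up t - heav_pairing f c d sg um up t)
    <= 3 * (Rabs um + Rabs up) * M * E * t.
Proof.
  intros Ht Hus H1 H2.
  assert (H12 : Rabs (s1 - s2) <= 2 * E).
  { apply Rabs_le_between in H1, H2. apply Rabs_le_between. lra. }
  assert (Hus_abs : Rabs us <= Rabs um + Rabs up) by (unfold Rabs; repeat destruct Rcase_abs; lra).
  (* the difference is  um (J(sg t) - J(s1 t)) + us (J(s1 t) - J(s2 t)) + up (J(s2 t) - J(sg t)) *)
  assert (A1 := abs_mul_le um _ _ _ (Rle_refl _)
                  (tail_shift_bound t sg s1 E Ht ltac:(now rewrite Rabs_minus_sym))).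
  assert (A2 := abs_mul_le us _ _ _ Hus_abs (tail_shift_bound t s1 s2 (2 * E) Ht H12)).
  assert (A3 := abs_mul_le up _ _ _ (Rle_refl _) (tail_shift_bound t s2 sg E Ht H2)).
  apply Rabs_le_between in A1, A2, A3. apply Rabs_le_between.
  unfold heav_pairing, step_pairing. lra.
Qed.

Lemma v_pairing_estimate vm vp vs s1 s2 sg T E om t :
  0 <= t -> 0 < vm -> 0 < vp -> 0 < vs -> 0 <= om -> s1 <= s2 ->
  Rabs (s1 - sg) <= E -> Rabs (s2 - sg) <= E ->
  Rabs (vs * (s2 - s1) - T) <= (vm + vp) * E ->
  (forall x, s1 * t <= x <= s2 * t -> Rabs (f t x - f t (sg * t)) <= om) ->
  Rabs (step_pairing f c d s1 s2 vm vs vp t - heav_pairing f c d sg vm vp t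
        - T * t * f t (sg * t))
    <= (3 * (vm + vp) * M * E + (T + (vm + vp) * E) * om) * t.
Proof.
  intros Ht Hvm Hvp Hvs Hom H12 H1 H2 Hmass Hosc.
  assert (HF : Rabs (f t (sg * t)) <= M) by apply f_le_M.
  assert (Hst : s1 * t <= s2 * t) by (apply Rmult_le_compat_r; lra).
  (* the difference is  vm (J(sg t) - J(s1 t)) + vp (J(s2 t) - J(sg t))
       + vs (J(s1 t) - J(s2 t) - (s2 - s1) t F) + (vs (s2 - s1) - T) t F,
     with F = f(t, sg t); J(s1 t) - J(s2 t) = int_{s1 t}^{s2 t} f t concentrates to (s2 - s1) t F *)
  assert (Hmid := middle_integral_approx t (s1 * t) (s2 * t) (sg * t) om Hst Hosc).
  rewrite <- tail_sub in Hmid.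
  assert (A1 := abs_mul_le vm _ _ _ (Req_le _ _ (Rabs_pos_eq _ (Rlt_le _ _ Hvm)))
                  (tail_shift_bound t sg s1 E Ht ltac:(now rewrite Rabs_minus_sym))).
  assert (A2 := abs_mul_le vp _ _ _ (Req_le _ _ (Rabs_pos_eq _ (Rlt_le _ _ Hvp)))
                  (tail_shift_bound t s2 sg E Ht H2)).
  assert (A3 := abs_mul_le vs _ _ _ (Req_le _ _ (Rabs_pos_eq _ (Rlt_le _ _ Hvs))) Hmid).
  assert (A3_mass : vs * ((s2 * t - s1 * t) * om) <= (T + (vm + vp) * E) * om * t).
  { apply Rabs_le_between in Hmass.
    replace (vs * ((s2 * t - s1 * t) * om)) with (vs * (s2 - s1) * (om * t)) by ring.
    replace ((T + (vm + vp) * E) * om * t) with ((T + (vm + vp) * E) * (om * t)) by ring.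
    apply Rmult_le_compat_r; [apply Rmult_le_pos|]; lra. }
  assert (A4 := abs_mul_le _ _ _ _ Hmass (abs_mul_le t _ t M (Req_le _ _ (Rabs_pos_eq _ Ht)) HF)).
  apply Rabs_le_between in A1, A2, A3, A4. apply Rabs_le_between.
  unfold heav_pairing, step_pairing. lra.
Qed.

End Estimates.

Lemma inner_integrals_converge (um up vm vp sg T theta : R) :
  0 <= a -> 0 < vm -> 0 < vp -> 0 <= T -> 0 < theta ->
  exists rho, 0 < rho /\
  forall E s1 s2 us vs, 0 <= E < rho -> up <= us <= um -> 0 < vs -> s1 <= s2 ->
    Rabs (s1 - sg) <= E -> Rabs (s2 - sg) <= E ->
    Rabs (vs * (s2 - s1) - T) <= (vm + vp) * E ->
    forall t, a <= t <= b ->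
      Rabs (step_pairing f c d s1 s2 um us up t - heav_pairing f c d sg um up t) <= theta /\
      Rabs (step_pairing f c d s1 s2 vm vs vp t - heav_pairing f c d sg vm vp t
            - T * t * f t (sg * t)) <= theta.
Proof.
  intros Ha Hvm Hvp HT Htheta.
  destruct f_bounded as [M [HM HMb]].
  pose proof (Rabs_pos um). pose proof (Rabs_pos up).
  (* oscillation tolerance om for f near the limiting shock line, and its modulus del *)
  destruct (half_share ((T + (vm + vp)) * b) theta) as [Hom0 Hom_theta]; [nra | lra |].
  set (om := theta / (2 * ((T + (vm + vp)) * b + 1))) in *.
  destruct (f_unif_cont om) as [del [Hdel Hclose]]; [lra|].
  (* rho keeps E <= 1, the window E t inside del, and the O(E) error terms below theta / 2 *)
  set (K := 3 * (Rabs um + Rabs up + (vm + vp)) * M * b).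
  assert (HK : 0 <= K) by (unfold K; apply Rmult_le_pos; [apply Rmult_le_pos|]; lra).
  destruct (half_share K theta) as [Hshare0 Hshare]; [exact HK | lra |].
  set (rho := Rmin (Rmin 1 (del / (2 * b))) (theta / (2 * (K + 1)))).
  assert (Hrho0 : 0 < rho) by (unfold rho; repeat apply Rmin_pos; try apply Rdiv_lt_0_compat; lra).
  assert (Hrho1 : rho <= 1) by (unfold rho; eapply Rle_trans; apply Rmin_l).
  assert (Hrho_del : rho * b <= del / 2).
  { apply Rle_trans with (del / (2 * b) * b); [|right; field; lra].
    apply Rmult_le_compat_r; [lra|]. unfold rho. eapply Rle_trans; [apply Rmin_l | apply Rmin_r]. }
  assert (Hrho_K : K * rho <= theta / 2).
  { eapply Rle_trans; [|exact Hshare]. apply Rmult_le_compat_l; [exact HK | apply Rmin_r]. }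
  exists rho; split; [exact Hrho0|].
  intros E s1 s2 us vs HE Hus Hvs H12 H1 H2 Hmass t Ht.
  assert (HEt : 0 <= E * t <= rho * b) by (split; [apply Rmult_le_pos|apply Rmult_le_compat]; lra).
  assert (HKE : 3 * (Rabs um + Rabs up + (vm + vp)) * M * (E * t) <= theta / 2).
  { apply Rle_trans with (K * rho); [|exact Hrho_K]. unfold K.
    rewrite (Rmult_assoc _ b rho), (Rmult_comm b rho).
    apply Rmult_le_compat_l; [apply Rmult_le_pos|]; lra. }
  split.
  - eapply Rle_trans; [apply (u_pairing_estimate M HMb um up us s1 s2 sg E t); lra|].
    assert (0 <= (vm + vp) * M * (E * t)) by (apply Rmult_le_pos; nra). lra.
  - assert (Hosc : forall x, s1 * t <= x <= s2 * t -> Rabs (f t x - f t (sg * t)) <= om).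
    { intros x Hx. left. apply Hclose; [rewrite Rminus_diag, Rabs_R0; lra|].
      apply Rabs_le_between in H1, H2. apply Rabs_lt_between'. nra. }
    eapply Rle_trans; [apply (v_pairing_estimate M HMb vm vp vs s1 s2 sg T E om t); auto; lra|].
    assert (Hmass_om : (T + (vm + vp) * E) * om * t <= (T + (vm + vp)) * b * om).
    { assert (HVE : (vm + vp) * E <= vm + vp) by nra.
      apply Rle_trans with ((T + (vm + vp)) * om * t).
      - apply Rmult_le_compat_r; [lra|]. apply Rmult_le_compat_r; lra.
      - replace ((T + (vm + vp)) * b * om) with ((T + (vm + vp)) * om * b) by ring.
        apply Rmult_le_compat_l; nra. }
    nra.
Qed.

Lemma two_shock_pairings_converge um up vm vp theta :
  0 <= a -> 0 < vm -> 0 < vp -> up < um -> 0 < theta ->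
  exists delta, 0 < delta /\ forall e1 e2 us vs, 0 < e1 < delta -> 0 < e2 < delta ->
    two_shock e1 e2 um vm up vp us vs ->
    let s1 := sigma1 e2 um vm us vs in let s2 := sigma2 e2 up vp us vs in
    let sg := (um + up) / 2 in
    s1 <= s2 /\ forall t, a <= t <= b ->
      Rabs (step_pairing f c d s1 s2 um us up t - heav_pairing f c d sg um up t) <= theta /\
      Rabs (step_pairing f c d s1 s2 vm vs vp t
            - (heav_pairing f c d sg vm vp t + (vm + vp) * (um - up) * t / 2 * f t (sg * t)))
        <= theta.
Proof.
  intros Ha Hvm Hvp Hu Htheta.
  destruct (inner_integrals_converge um up vm vp ((um + up) / 2) ((vm + vp) * (um - up) / 2) theta)
    as [rho [Hrho Hconv]]; try nra.
  destruct (shock_deviation_small (vm + vp) rho) as [delta [Hdelta Hsmall]]; [lra | exact Hrho|].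
  exists delta. split; [exact Hdelta|]. intros e1 e2 us vs He1 He2 Hts s1 s2 sg.
  destruct (two_shock_speeds e1 e2 um vm up vp us vs) as [Hvs [Hus [H12 [H1 [H2 Hmass]]]]];
    try tauto; try lra.
  assert (HE : 0 <= 4 * e2 + sqrt e1 * (vm + vp) < rho).
  { pose proof (sqrt_pos e1). split; [nra | apply Hsmall; lra]. }
  split; [exact H12|]. intros t Ht.
  destruct (Hconv _ s1 s2 us vs HE ltac:(lra) Hvs H12 H1 H2 Hmass t Ht) as [Hu_close Hv_close].
  split; [exact Hu_close|].
  replace (step_pairing f c d s1 s2 vm vs vp t
           - (heav_pairing f c d sg vm vp t + (vm + vp) * (um - up) * t / 2 * f t (sg * t)))
    with (step_pairing f c d s1 s2 vm vs vp t - heav_pairing f c d sg vm vp t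
          - (vm + vp) * (um - up) / 2 * t * f t (sg * t)) by field.
  exact Hv_close.
Qed.

End TestFunction.

Theorem theorem5p1 (um up vm vp : R) (Hvm : 0 < vm) (Hvp : 0 < vp) (Hu : up < um)
  (phi : R -> R -> R) (Hphi : smooth2 phi)
  (a b c d : R) (Ha : 0 < a) (Hab : a < b) (Hcd : c < d)
  (Hsupp : forall t x, ~ (a <= t <= b /\ c <= x <= d) -> phi t x = 0) :
  let sigma := (um + up) / 2 in
  let w := fun t => (vm + vp) * (um - up) * t / 2 in
  exists Lu Lv Lw : R,
    DInt_is (fun t x => (um + (up - um) * Heav (x - sigma * t)) * phi t x) a b c d Lu /\
    DInt_is (fun t x => (vm + (vp - vm) * Heav (x - sigma * t)) * phi t x) a b c d Lv /\
    RInt_is (fun t => w t * phi t (sigma * t)) a b Lw /\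
    forall eta, 0 < eta -> exists delta, 0 < delta /\
      forall e1 e2 us vs, 0 < e1 < delta -> 0 < e2 < delta ->
        two_shock e1 e2 um vm up vp us vs ->
        exists Iu Iv : R,
          DInt_is (fun t x => brio_u e2 um vm up vp us vs t x * phi t x) a b c d Iu /\
          DInt_is (fun t x => brio_v e2 um vm up vp us vs t x * phi t x) a b c d Iv /\
          Rabs (Iu - Lu) < eta /\ Rabs (Iv - (Lv + Lw)) < eta.
Proof.
  intros sigma w.
  pose proof (smooth2_cont2 phi Hphi) as Hcont.
  pose proof (pairing_heaviside phi a b c d Hcont Hab Hcd Hsupp) as Hheav.
  pose proof (pairing_piece3 phi a b c d Hcont Hab Hcd Hsupp) as Hpiece.
  pose proof (step_pairing_integrable phi a b c d Hcont Hab Hcd Hsupp) as Hstep_int.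
  assert (Hw : ex_RInt (fun t => w t * phi t (sigma * t)) a b).
  { apply (weighted_trace_integrable phi a b c d Hcont Hab Hcd Hsupp). intros t.
    apply (ex_derive_continuous (V:=R_NormedModule)). unfold w. auto_derive. exact I. }
  exists (RInt (heav_pairing phi c d sigma um up) a b),
    (RInt (heav_pairing phi c d sigma vm vp) a b), (RInt (fun t => w t * phi t (sigma * t)) a b).
  split; [apply DInt_is_RInt; [intros t _; apply Hheav | apply Hstep_int]|].
  split; [apply DInt_is_RInt; [intros t _; apply Hheav | apply Hstep_int]|].
  split; [now apply RInt_is_RInt|].
  intros eta Heta.
  assert (Htheta : (b - a) * (eta / (2 * (b - a))) < eta) by (field_simplify; lra).
  destruct (two_shock_pairings_converge phi a b c d Hcont Hab Hcd Hsupp um up vm vp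
              (eta / (2 * (b - a)))) as [delta [Hdelta Hconv]];
    try (apply Rdiv_lt_0_compat); try lra.
  exists delta. split; [exact Hdelta|]. intros e1 e2 us vs He1 He2 Hts.
  destruct (Hconv e1 e2 us vs He1 He2 Hts) as [H12 Hclose].
  exists (RInt (step_pairing phi c d (sigma1 e2 um vm us vs) (sigma2 e2 up vp us vs) um us up) a b),
    (RInt (step_pairing phi c d (sigma1 e2 um vm us vs) (sigma2 e2 up vp us vs) vm vs vp) a b).
  assert (Hst : forall t, a <= t <= b -> sigma1 e2 um vm us vs * t <= sigma2 e2 up vp us vs * t)
    by (intros t Ht; apply Rmult_le_compat_r; lra).
  split; [apply DInt_is_RInt; [intros t Ht; apply Hpiece, Hst, Ht | apply Hstep_int]|].
  split; [apply DInt_is_RInt; [intros t Ht; apply Hpiece, Hst, Ht | apply Hstep_int]|].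
  split; eapply Rle_lt_trans; try exact Htheta.
  - apply RInt_close; [lra | apply Hstep_int | apply Hstep_int | apply Hclose].
  - apply RInt_close_sum; [lra | apply Hstep_int | apply Hstep_int | exact Hw | apply Hclose].
Qed.
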